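(* For every integer $n\ge 0$ and every complex number $x$, \[ \sum_{j=0}^{n}(-1)^jL_{n-2j}(x)=\sum_{j=0}^{n}\left(\frac{x}{2}\right)^jL_{n-j}(x)=2F_{n+1}(x). \] In particular, with Pell numbers $P_n=F_n(2)$ and Pell–Lucas numbers $Q_n=L_n(2)$, $\sum_{j=0}^n(-1)^jQ_{n-2j}=\sum_{j=0}^nQ_{n-j}=2P_{n+1}$.
   Context: The Fibonacci polynomials $F_n(x)$ and Lucas polynomials $L_n(x)$ are defined by $F_0(x)=0$, $F_1(x)=1$, $L_0(x)=2$, $L_1(x)=x$ and $G_{n+1}(x)=xG_n(x)+G_{n-1}(x)$; they are extended to negative indices by $F_{-n}(x)=(-1)^{n-1}F_n(x)$ and $L_{-n}(x)=(-1)^nL_n(x)$ (equivalently, by the Binet forms $F_n(x)=(\alpha(x)^n-\beta(x)^n)/(\alpha(x)-\beta(x))$, $L_n(x)=\alpha(x)^n+\beta(x)^n$ with $\alpha(x),\beta(x)=(x\pm\sqrt{x^2+4})/2$). *)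

From HB Require Import structures.
From mathcomp Require Import all_boot all_order all_algebra.
From mathcomp Require Import complex.
From mathcomp Require Import reals.
Set Implicit Arguments. Unset Strict Implicit. Unset Printing Implicit Defensive.
Import Order.TTheory GRing.Theory Num.Theory.
Local Open Scope ring_scope.

Fixpoint fibp (T : ringType) (x : T) (n : nat) : T :=
  match n with
  | 0%N => 0
  | 1%N => 1
  | (m.+1 as k).+1 => x * fibp x k + fibp x m
  end.

Fixpoint lucp (T : ringType) (x : T) (n : nat) : T :=
  match n with
  | 0%N => 2
  | 1%N => x
  | (m.+1 as k).+1 => x * lucp x k + lucp x m
  end.

(* Extension to integer indices:
   F_{-k}(x) = (-1)^(k-1) F_k(x),  L_{-k}(x) = (-1)^k L_k(x). *)
Definition fibz (T : ringType) (x : T) (z : int) : T :=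
  match z with
  | Posz n => fibp x n
  | Negz n => (-1) ^+ n * fibp x n.+1      (* z = -(n+1) *)
  end.

Definition lucz (T : ringType) (x : T) (z : int) : T :=
  match z with
  | Posz n => lucp x n
  | Negz n => (-1) ^+ n.+1 * lucp x n.+1   (* z = -(n+1) *)
  end.

(* Both sums satisfy simple recurrences in n. The second one, with ratio y = x/2,
   grows as S_{n+1} = L_{n+1} + y S_n, and 2 y F_{n+1} + L_{n+1} = 2 F_{n+2} since
   L_n = 2 F_{n+1} - x F_n. For the alternating one, peeling off the first and the last
   term gives S_{n+2} = 2 L_{n+2} - S_n, because L_{-k} = (-1)^k L_k, and then
   L_{n+2} = F_{n+3} + F_{n+1} closes the induction. *)
From HB Require Import structures.
From mathcomp Require Import all_boot all_order all_algebra.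
From mathcomp Require Import complex.
From mathcomp Require Import reals.
From mathcomp Require Import ring.
Set Implicit Arguments. Unset Strict Implicit. Unset Printing Implicit Defensive.
Import Order.TTheory GRing.Theory Num.Theory.
Local Open Scope ring_scope.

Section FibonacciLucas.

Variables (T : comNzRingType) (x : T).

Lemma fibpSS n : fibp x n.+2 = x * fibp x n.+1 + fibp x n.
Proof. by []. Qed.

Lemma lucpSS n : lucp x n.+2 = x * lucp x n.+1 + lucp x n.
Proof. by []. Qed.

Lemma lucpS_fibp n : lucp x n.+1 = fibp x n.+2 + fibp x n.
Proof.
suff [] : lucp x n.+1 = fibp x n.+2 + fibp x n /\
          lucp x n.+2 = fibp x n.+3 + fibp x n.+1 by [].
elim: n => [|n [IH1 IH2]]; first by split => /=; ring.
split => //.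
rewrite lucpSS IH1 IH2 [fibp x n.+4]fibpSS [fibp x n.+3]fibpSS [fibp x n.+2]fibpSS.
ring.
Qed.

Lemma lucp_fibp n : lucp x n = 2 * fibp x n.+1 - x * fibp x n.
Proof.
case: n => [|n]; first by rewrite /=; ring.
by rewrite lucpS_fibp fibpSS; ring.
Qed.

Lemma fibz_nat n : fibz x n%:Z = fibp x n.
Proof. by []. Qed.

Lemma lucz_nat_sub n j : (j <= n)%N -> lucz x (n%:Z - j%:Z) = lucp x (n - j).
Proof. by move=> le_jn; rewrite subzn. Qed.

Lemma lucz_opp_nat k : lucz x (- k%:Z) = (-1) ^+ k * lucp x k.
Proof. by case: k => [|k]; rewrite ?expr0 ?mul1r // NegzE opprK. Qed.

Lemma sum_geometric_lucz y n : 2 * y = x ->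
  \sum_(0 <= j < n.+1) y ^+ j * lucz x (n%:Z - j%:Z) = 2 * fibz x (n.+1)%:Z.
Proof.
move=> two_y.
have -> : \sum_(0 <= j < n.+1) y ^+ j * lucz x (n%:Z - j%:Z)
        = \sum_(0 <= j < n.+1) y ^+ j * lucp x (n - j).
  by apply: eq_big_nat => j /andP[_ lt_jn]; rewrite lucz_nat_sub // -ltnS.
rewrite fibz_nat; elim: n => [|n IH]; first by rewrite big_nat1 /=; ring.
rewrite big_nat_recl // subn0.
under eq_bigr do rewrite subSS exprS -mulrA.
rewrite -big_distrr IH lucp_fibp [fibp x n.+2]fibpSS /=.
move: (fibp x n.+1) (fibp x n) => F1 F0; rewrite -two_y; ring.
Qed.

Definition alt_lucz_sum n :=
  \sum_(0 <= j < n.+1) (-1) ^+ j * lucz x (n%:Z - 2 * j%:Z).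

Lemma alt_lucz_sumSS n : alt_lucz_sum n.+2 = 2 * lucp x n.+2 - alt_lucz_sum n.
Proof.
rewrite /alt_lucz_sum big_nat_recr // big_nat_recl // expr0 mul1r mulr0 subr0.
have shift j : n.+2%:Z - 2 * j.+1%:Z = n%:Z - 2 * j%:Z.
  by rewrite -[n.+2]addn2 -[j.+1]addn1 !PoszD; ring.
under eq_bigr do rewrite shift exprS mulN1r mulNr.
have -> : n.+2%:Z - 2 * n.+2%:Z = - n.+2%:Z by ring.
rewrite sumrN lucz_opp_nat mulrA -exprD addnn -mul2n exprM sqrrN !expr1n mul1r /=.
ring.
Qed.

Lemma alt_lucz_sumE n : alt_lucz_sum n = 2 * fibz x (n.+1)%:Z.
Proof.
suff [] : alt_lucz_sum n = 2 * fibp x n.+1 /\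
          alt_lucz_sum n.+1 = 2 * fibp x n.+2 by [].
elim: n => [|n [IH1 IH2]].
  split; first by rewrite /alt_lucz_sum big_nat1 /=; ring.
  by rewrite /alt_lucz_sum big_nat_recr // big_nat1 /=; ring.
split => //.
by rewrite alt_lucz_sumSS IH1 lucpS_fibp [fibp x n.+3]fibpSS; ring.
Qed.

End FibonacciLucas.

Theorem theorem9 :
  (forall (R : realType) (n : nat) (x : R[i]),
      (\sum_(0 <= j < n.+1) (-1) ^+ j * lucz x (n%:Z - 2 * j%:Z)
        = \sum_(0 <= j < n.+1) (x / 2) ^+ j * lucz x (n%:Z - j%:Z))
   /\ (\sum_(0 <= j < n.+1) (x / 2) ^+ j * lucz x (n%:Z - j%:Z)
        = 2 * fibz x (n.+1)%:Z))
  /\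
  (forall n : nat,
      (\sum_(0 <= j < n.+1) (-1) ^+ j * lucz (2 : int) (n%:Z - 2 * j%:Z)
        = \sum_(0 <= j < n.+1) lucz (2 : int) (n%:Z - j%:Z))
   /\ (\sum_(0 <= j < n.+1) lucz (2 : int) (n%:Z - j%:Z)
        = 2 * fibz (2 : int) (n.+1)%:Z)).
Proof.
split=> [R n x | n].
  have two_half : 2 * (x / 2) = x by rewrite mulrCA divff ?mulr1 ?pnatr_eq0.
  by rewrite -/(alt_lucz_sum x n) alt_lucz_sumE sum_geometric_lucz.
have -> : \sum_(0 <= j < n.+1) lucz (2 : int) (n%:Z - j%:Z)
        = \sum_(0 <= j < n.+1) 1 ^+ j * lucz (2 : int) (n%:Z - j%:Z).
  by apply: eq_bigr => j _; rewrite expr1n mul1r.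
by rewrite -/(alt_lucz_sum 2 n) alt_lucz_sumE sum_geometric_lucz ?mulr1.
Qed.
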